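(* Let $m\geq 17$ and $k\geq 1$ be integers and let $c(x)=1+\sum_{j\in\{1,3,5,6,8\}}(x^j+x^{m-j})\in\mathbb{F}_2[x]$. Then $\gcd(c(x^k),x^m-1)=1$ if and only if $\gcd(m,3k)=\gcd(m,7k)=\gcd(m,k)$.
   Context: All polynomials are over $\mathbb{F}_2$. *)

From HB Require Import structures.
From mathcomp Require Import all_boot all_order all_algebra.
Set Implicit Arguments. Unset Strict Implicit. Unset Printing Implicit Defensive.
Import GRing.Theory.
Local Open Scope ring_scope.

Definition cpoly (m : nat) : {poly 'F_2} :=
  1 + \sum_(j <- [:: 1; 3; 5; 6; 8]%N) ('X^j + 'X^(m - j)).

From HB Require Import structures.
From mathcomp Require Import all_boot all_order all_algebra.
From mathcomp Require Import ring zify.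
Set Implicit Arguments. Unset Strict Implicit. Unset Printing Implicit Defensive.
Import GRing.Theory.
Local Open Scope ring_scope.

(* Write y = x^k, M = x^m - 1 and, for n >= 1,
   geom n y = 1 + y + ... + y^(n-1), so that geom n y = (x^(nk) - 1) / (x^k - 1).
   1. Over any field, gcd(x^a - 1, x^b - 1) = x^(gcd a b) - 1 (in the form:
      every common divisor divides x^(gcd a b) - 1), hence for a > 0,
      x^a - 1 | x^b - 1  iff  a | b.
   2. If n = 1 in the field, x^k - 1 and geom n y are coprime, and then
      geom n y is coprime to M  iff  gcd(m, nk) = gcd(m, k).
   3. Over F_2 one has the identity (valid for m >= 8, here m >= 17)
        y^8 c(y) = (geom 3 y)^5 (geom 7 y) + (y^m - 1) R(y).
      Since y is coprime to M and M divides y^m - 1, c(y) is coprime to M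
      iff both geom 3 y and geom 7 y are, and step 2 (with 3 = 7 = 1 in
      F_2) translates this into the two gcd conditions. *)

Section CyclotomicBinomials.
Variable F : fieldType.

(* x^a - 1 divides x^(ab) - 1, by the factorisation of z^b - 1 at z = x^a. *)
Lemma dvdp_Xn_sub1_mul (a b : nat) : ('X^a - 1 : {poly F}) %| 'X^(a * b) - 1.
Proof. by rewrite exprM (subrX1 ('X^a)) dvdp_mulIl. Qed.

(* Common divisors of x^a - 1 and x^b - 1 divide x^(gcd a b) - 1: this is
   the Bezout relation gcd a b = u a - v b lifted to exponents. *)
Lemma dvdp_Xn_sub1_gcd (p : {poly F}) (a b : nat) :
  p %| 'X^a - 1 -> p %| 'X^b - 1 -> p %| 'X^(gcdn a b) - 1.
Proof.
have [->|a0] := posnP a; first by rewrite gcd0n.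
move=> pa pb; case: (egcdnP b a0) => u v Bezout _.
have pua : p %| 'X^(u * a) - 1.
  by apply: dvdp_trans pa _; rewrite mulnC dvdp_Xn_sub1_mul.
have pvb : p %| 'X^(v * b) - 1.
  by apply: dvdp_trans pb _; rewrite mulnC dvdp_Xn_sub1_mul.
have -> : ('X^(gcdn a b) - 1 : {poly F}) =
          ('X^(u * a) - 1) - 'X^(gcdn a b) * ('X^(v * b) - 1).
  by rewrite Bezout exprD; ring.
by rewrite dvdp_sub // dvdp_mull.
Qed.

Lemma dvdp_Xn_sub1E (a b : nat) : (0 < a)%N ->
  (('X^a - 1 : {poly F}) %| 'X^b - 1) = (a %| b)%N.
Proof.
move=> a0; apply/idP/idP; last by case/dvdnP=> c ->; rewrite mulnC dvdp_Xn_sub1_mul.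
move=> dab; have dag := dvdp_Xn_sub1_gcd (dvdpp _) dab.
have g0 : (0 < gcdn a b)%N by rewrite gcdn_gt0 a0.
have nz : ('X^(gcdn a b) - 1 : {poly F}) != 0.
  by rewrite -size_poly_eq0 size_XnsubC.
have := dvdp_leq nz dag; rewrite !size_XnsubC // ltnS => le_a_g.
apply/gcdn_idPl/eqP; rewrite eqn_leq le_a_g andbT.
by rewrite dvdn_leq // dvdn_gcdl.
Qed.

Definition geom (n : nat) (y : {poly F}) : {poly F} := \sum_(i < n) y ^+ i.

Lemma Xn_sub1_geom (n k : nat) :
  ('X^(n * k) - 1 : {poly F}) = ('X^k - 1) * geom n 'X^k.
Proof. by rewrite mulnC exprM subrX1. Qed.

(* geom n 'X^k = n (mod x^k - 1), so it is coprime to x^k - 1 when n = 1 in F. *)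
Lemma coprimep_Xn_sub1_geom (n k : nat) : (n%:R : F) = 1 ->
  coprimep ('X^k - 1) (geom n 'X^k).
Proof.
move=> n1.
have : ('X^k - 1 : {poly F}) %| \sum_(i < n) (('X^k) ^+ i - 1).
  apply: (big_ind (fun r : {poly F} => 'X^k - 1 %| r)) => [|r s|i _].
  - exact: dvdp0.
  - exact: dvdp_add.
  - by rewrite -exprM dvdp_Xn_sub1_mul.
case/dvdpP=> q Hq.
have -> : geom n 'X^k = q * ('X^k - 1) + 1.
  rewrite -Hq sumrB sumr_const card_ord -addrA.
  suff -> : (1 : {poly F}) *+ n = 1 by rewrite addNr addr0.
  by rewrite -polyC1 -polyCMn -mulr_natl mulr1 n1.
by rewrite coprimep_addl_mul coprimep1.
Qed.

Lemma coprimep_geom_Xn_sub1 (n m k : nat) : (n%:R : F) = 1 -> (0 < m)%N ->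
  coprimep (geom n 'X^k) ('X^m - 1) <-> gcdn m (n * k) = gcdn m k.
Proof.
move=> n1 m0; have cop_k := coprimep_Xn_sub1_geom k n1.
have gk_dvd_k : ('X^(gcdn m k) - 1 : {poly F}) %| 'X^k - 1.
  by rewrite dvdp_Xn_sub1E ?gcdn_gt0 ?m0 // dvdn_gcdr.
split=> [cop|E].
- set g := gcdn m (n * k).
  have g0 : (0 < g)%N by rewrite gcdn_gt0 m0.
  have g_m : ('X^g - 1 : {poly F}) %| 'X^m - 1 by rewrite dvdp_Xn_sub1E ?dvdn_gcdl.
  have g_nk : ('X^g - 1 : {poly F}) %| 'X^(n * k) - 1.
    by rewrite dvdp_Xn_sub1E ?dvdn_gcdr.
  have g_cop : coprimep ('X^g - 1 : {poly F}) (geom n 'X^k).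
    by rewrite coprimep_sym (coprimep_dvdl g_m).
  have g_k : ('X^g - 1 : {poly F}) %| 'X^k - 1.
    by rewrite -(Gauss_dvdpl _ g_cop) -Xn_sub1_geom.
  have := dvdp_Xn_sub1_gcd g_m g_k; rewrite dvdp_Xn_sub1E // => g_gk.
  apply/eqP; rewrite eqn_dvd g_gk dvdn_gcd dvdn_gcdl.
  by rewrite (dvdn_trans (dvdn_gcdr _ _)) ?dvdn_mull.
- apply/coprimepP => d d_geom d_m.
  have d_nk : d %| 'X^(n * k) - 1 by rewrite Xn_sub1_geom dvdp_mull.
  have := dvdp_Xn_sub1_gcd d_m d_nk; rewrite E => d_gk.
  by move/coprimepP: cop_k => /(_ d) -> //; exact: dvdp_trans d_gk gk_dvd_k.
Qed.

End CyclotomicBinomials.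

(* x is coprime to x^m - 1 for m > 0, since 0 is not a root of x^m - 1. *)
Lemma coprimep_X_Xn_sub1 (F : fieldType) (m : nat) : (0 < m)%N ->
  coprimep ('X : {poly F}) ('X^m - 1).
Proof.
move=> m0; rewrite coprimep_sym -[X in coprimep _ X]subr0 -polyC0 coprimep_XsubC.
by rewrite /root !hornerE expr0n eqn0Ngt m0 sub0r oppr_eq0 oner_eq0.
Qed.

(* Writing y^(m-j) = y^(m-8) y^(8-j), both sides become polynomials in y and
   y^(m-8) that differ over the integers by twice the polynomial D below. *)
Lemma cpoly_comp_identity (m : nat) (y : {poly 'F_2}) : (8 <= m)%N ->
  y ^+ 8 * (cpoly m \Po y) =
  geom 3 y ^+ 5 * geom 7 y
  + (y ^+ m - 1) * (y ^+ 7 + y ^+ 5 + y ^+ 3 + y ^+ 2 + 1).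
Proof.
move=> m8; rewrite /cpoly /geom !big_cons big_nil !comp_polyD comp_poly0.
rewrite -polyC1 comp_polyC !comp_Xn_poly polyC1.
set w := y ^+ (m - 8).
have ym : y ^+ m = w * y ^+ 8 by rewrite -exprD subnK.
have ymj j : (j <= 8)%N -> y ^+ (m - j) = w * y ^+ (8 - j).
  by move=> hj; rewrite -exprD; congr (_ ^+ _); lia.
rewrite ym !ymj // !big_ord_recr big_ord0 /=.
have two0 : (1 + 1 : {poly 'F_2}) = 0.
  by rewrite -polyC1 -polyCD (_ : (1 + 1 : 'F_2) = 0) //; apply/eqP.
pose D := 3%:R * y + 10%:R * y ^+ 2 + 25%:R * y ^+ 3 + 48%:R * y ^+ 4
  + 73%:R * y ^+ 5 + 96%:R * y ^+ 6 + 110%:R * y ^+ 7 + 115%:R * y ^+ 8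
  + 110%:R * y ^+ 9 + 96%:R * y ^+ 10 + 73%:R * y ^+ 11 + 48%:R * y ^+ 12
  + 25%:R * y ^+ 13 + 10%:R * y ^+ 14 + 3%:R * y ^+ 15 : {poly 'F_2}.
set rhs := (X in _ = X).
have -> : rhs = rhs + (1 + 1) * - D by rewrite two0 mul0r addr0.
by rewrite /rhs /D; ring.
Qed.

Theorem proposition8 (m k : nat) (hm : (17 <= m)%N) (hk : (1 <= k)%N) :
  coprimep ((cpoly m) \Po 'X^k) ('X^m - 1) <->
  (gcdn m (3 * k) = gcdn m k /\ gcdn m (7 * k) = gcdn m k).
Proof.
have m0 : (0 < m)%N by apply: leq_trans hm.
set M := ('X^m - 1 : {poly 'F_2}); set y := ('X^k : {poly 'F_2}).
have y8_cop : coprimep (y ^+ 8) M.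
  by rewrite coprimep_expl // /y coprimep_expl // coprimep_X_Xn_sub1.
have [Q ym_sub1] : exists Q, y ^+ m - 1 = Q * M.
  by apply/dvdpP; rewrite /y -exprM mulnC dvdp_Xn_sub1_mul.
have reduce : coprimep (cpoly m \Po y) M =
              coprimep (geom 3 y) M && coprimep (geom 7 y) M.
  rewrite -[LHS]andTb -y8_cop -coprimepMl cpoly_comp_identity ?(leq_trans _ hm) //.
  rewrite ym_sub1 (mulrAC Q) addrC coprimep_sym coprimep_addl_mul coprimep_sym.
  by rewrite coprimepMl coprimep_pexpl.
have [odd3 odd7] : (3%:R : 'F_2) = 1 /\ (7%:R : 'F_2) = 1 by split; apply/eqP.
rewrite reduce -(coprimep_geom_Xn_sub1 _ odd3 m0) -(coprimep_geom_Xn_sub1 _ odd7 m0).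
by split=> [/andP|/andP].
Qed.
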